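(* For any compact metric space $(X,d)$, $$\underline{\dim}(X,d)\le\underline{\mathrm{mo}}(\mathcal K(X),H)\le\overline{\mathrm{mo}}(\mathcal K(X),H)\le\overline{\dim}(X,d).$$
   Context: For a metric space $Y$ with metric $\rho$, $A\subset Y$ nonempty and $\varepsilon>0$, $N(A,\varepsilon)$ is the smallest cardinality of a set $E\subset Y$ with $A\subset\bigcup_{x\in E}B(x,\varepsilon)$. Upper/lower box dimensions: $\overline{\dim}(A)=\limsup_{\varepsilon\to0}\frac{\log N(A,\varepsilon)}{-\log\varepsilon}$, $\underline{\dim}(A)$ with liminf. Upper/lower metric orders: $\overline{\mathrm{mo}}(A)=\limsup_{\varepsilon\to0}\frac{\log\log N(A,\varepsilon)}{-\log\varepsilon}$, $\underline{\mathrm{mo}}(A)$ with liminf. $\mathcal K(X)$ is the space of nonempty closed subsets of $X$ with the Hausdorff metric $H$. *)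

From Stdlib Require List.
From HB Require Import structures.
From mathcomp Require Import all_boot all_order all_algebra.
From mathcomp Require Import all_classical all_reals all_analysis.
Set Implicit Arguments. Unset Strict Implicit. Unset Printing Implicit Defensive.
Import Order.TTheory GRing.Theory Num.Theory.
Local Open Scope classical_set_scope.
Local Open Scope ring_scope.

Section MetricDefs.
Variable R : realType.

Definition is_metric (T : Type) (d : T -> T -> R) : Prop :=
  [/\ forall x y, 0 <= d x y,
      forall x y, d x y = 0 <-> x = y,
      forall x y, d x y = d y x &
      forall x y z, d x z <= d x y + d y z].

Definition dball (T : Type) (d : T -> T -> R) (x : T) (e : R) : set T :=
  [set y | d x y < e].

Definition dopen (T : Type) (d : T -> T -> R) (U : set T) : Prop :=
  forall x, U x -> exists2 e : R, 0 < e & dball d x e `<=` U.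

Definition dclosed (T : Type) (d : T -> T -> R) (A : set T) : Prop :=
  dopen d (~` A).

Definition dcompact (T : Type) (d : T -> T -> R) : Prop :=
  forall F : set (set T), (forall U, F U -> dopen d U) ->
    setT `<=` \bigcup_(U in F) U ->
    exists2 s : seq (set T), (forall U, List.In U s -> F U) &
      setT `<=` \bigcup_(U in [set U | List.In U s]) U.

Definition covers_with (T : Type) (d : T -> T -> R) (A : set T) (e : R)
  (n : nat) : Prop :=
  exists E : seq T, size E = n /\ A `<=` \bigcup_(x in [set x | List.In x E]) dball d x e.

(* N(A, e): least cardinality of such a covering set (0 if none is finite;
   this never happens for totally bounded spaces) *)
Definition covnum (T : Type) (d : T -> T -> R) (A : set T) (e : R) : nat :=
  match pselect (exists n, covers_with d A e n) with
  | left h => ex_minn (P := fun n => `[< covers_with d A e n >])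
                (let: ex_intro n hn := h in ex_intro _ n (asboolT hn))
  | right _ => 0%N
  end.

Definition limsup0 (f : R -> \bar R) : \bar R :=
  ereal_inf [set ereal_sup [set f e | e in [set e | 0 < e < delta]]
            | delta in [set delta : R | 0 < delta]].
Definition liminf0 (f : R -> \bar R) : \bar R :=
  ereal_sup [set ereal_inf [set f e | e in [set e | 0 < e < delta]]
            | delta in [set delta : R | 0 < delta]].

Definition box_ratio (T : Type) (d : T -> T -> R) (A : set T) (e : R) : \bar R :=
  (ln (covnum d A e)%:R / (- ln e))%:E.
Definition mo_ratio (T : Type) (d : T -> T -> R) (A : set T) (e : R) : \bar R :=
  (ln (ln (covnum d A e)%:R) / (- ln e))%:E.

Definition upper_box_dim (T : Type) (d : T -> T -> R) (A : set T) : \bar R :=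
  limsup0 (box_ratio d A).
Definition lower_box_dim (T : Type) (d : T -> T -> R) (A : set T) : \bar R :=
  liminf0 (box_ratio d A).
Definition upper_metric_order (T : Type) (d : T -> T -> R) (A : set T) : \bar R :=
  limsup0 (mo_ratio d A).
Definition lower_metric_order (T : Type) (d : T -> T -> R) (A : set T) : \bar R :=
  liminf0 (mo_ratio d A).

Definition hyperspace (T : Type) (d : T -> T -> R) : Type :=
  {A : set T | A !=set0 /\ dclosed d A}.

Definition hausdorff_dist (T : Type) (d : T -> T -> R) (A B : set T) : R :=
  Num.max (sup [set inf [set d a b | b in B] | a in A])
          (sup [set inf [set d a b | a in A] | b in B]).

Definition hausdorff (T : Type) (d : T -> T -> R) :
  hyperspace d -> hyperspace d -> R :=
  fun A B => hausdorff_dist d (proj1_sig A) (proj1_sig B).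

End MetricDefs.

(* Write N(e) for the covering number of the compact metric space X and
   N_H(e) for that of (K(X), H).  The proof rests on two counting estimates:
   - upper: covering X by N(e/2) balls of radius e/2 with centres x_i, every
     closed set A lies within Hausdorff distance e/2 of the finite set
     {x_i | B(x_i, e/2) meets A}; hence N_H(e) <= 2 ^ N(e/2);
   - lower: a maximal 2e-separated set L has at least N(2e) points, and the
     finite sets indexed by distinct nonempty subsets of L never share an
     e-ball of K(X); hence 2 ^ N(2e) <= N_H(e) + 1.
   Taking ln twice turns these into ln ln N_H(e) <= ln N(e/2) and
   ln N(2e) + c <= ln ln N_H(e), and dividing by -ln e, a rescaling e -> e*k
   changes neither limsup nor liminf of such ratios as e -> 0.
   The file first develops these limit facts, the elementary ln ln bounds,
   generic facts on lists and on the Hausdorff distance, then the two counting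
   estimates in a compact metric space; the theorem combines them. *)

From Stdlib Require List.
From HB Require Import structures.
From mathcomp Require Import all_boot all_order all_algebra.
From mathcomp Require Import all_classical all_reals all_analysis.
From mathcomp Require Import lra zify.
Import Order.TTheory GRing.Theory Num.Theory.
Local Open Scope classical_set_scope.
Local Open Scope ring_scope.

Section LimitsAtZero.
Context {R : realType}.
Implicit Types (f : R -> \bar R) (F G : \bar R).

Lemma liminf0_gt f (r : \bar R) : (r < liminf0 f)%E ->
  exists2 D : R, 0 < D & forall e, 0 < e < D -> (r < f e)%E.
Proof.
move=> /ereal_sup_gt [_ [D D0 <-] rD]; exists D => // e he.
by apply: (lt_le_trans rD); apply: ereal_inf_lbound; exists e.
Qed.

Lemma liminf0_ge f (x : \bar R) :
  (exists2 D : R, 0 < D & forall e, 0 < e < D -> (x <= f e)%E) -> (x <= liminf0 f)%E.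
Proof.
move=> [D D0 xf]; apply: le_trans (ereal_sup_ubound _); last by exists D.
by apply: le_ereal_inf_tmp => _ [e he <-]; exact: xf.
Qed.

Lemma limsup0_lt f (r : \bar R) : (limsup0 f < r)%E ->
  exists2 D : R, 0 < D & forall e, 0 < e < D -> (f e < r)%E.
Proof.
move=> /ereal_inf_lt [_ [D D0 <-] Dr]; exists D => // e he.
by apply: le_lt_trans Dr; apply: ereal_sup_ubound; exists e.
Qed.

Lemma limsup0_le f (x : \bar R) :
  (exists2 D : R, 0 < D & forall e, 0 < e < D -> (f e <= x)%E) -> (limsup0 f <= x)%E.
Proof.
move=> [D D0 fx]; apply: le_trans; first by apply: ereal_inf_lbound; exists D.
by apply: ge_ereal_sup => _ [e he <-]; exact: fx.
Qed.

Lemma liminf0_le_limsup0 f : (liminf0 f <= limsup0 f)%E.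
Proof.
apply: ge_ereal_sup => _ [D1 D10 <-]; apply: le_ereal_inf_tmp => _ [D2 D20 <-].
pose e := Num.min D1 D2 / 2.
have m0 : 0 < Num.min D1 D2 by rewrite lt_min D10.
have e0 : 0 < e by rewrite divr_gt0.
have em : e < Num.min D1 D2 by rewrite /e ltr_pdivrMr // ltr_pMr // ltr1n.
move: em; rewrite lt_min => /andP [eD1 eD2].
apply: (@le_trans _ _ (f e)).
  by apply: ereal_inf_lbound; exists e => //; apply/andP.
by apply: ereal_sup_ubound; exists e => //; apply/andP.
Qed.

Lemma ereal_le_approx_lo F G :
  (forall r : R, (r%:E < F)%E -> forall t, 0 < t -> ((r - t)%:E <= G)%E) -> (F <= G)%E.
Proof.
case: F => [f| |] approx; last by rewrite leNye.
- apply/lee_subgt0Pr => t t0.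
  have -> : (f%:E - t%:E = (f - t / 2 - t / 2)%:E)%E by rewrite -addrA -opprD -splitr.
  by apply: approx; rewrite ?lte_fin ?ltrBlDr ?ltrDl divr_gt0.
- case: G approx => [g| |] approx //.
  + have := approx (g + 2) (ltry _) 1 ltr01; rewrite lee_fin; apply/contraTT => _.
    by rewrite -ltNge -addrA ltrDl subr_gt0 ltr1n.
  + by have := approx 0 (ltry _) 1 ltr01.
Qed.

Lemma ereal_le_approx_hi F G :
  (forall r : R, (G < r%:E)%E -> forall t, 0 < t -> (F <= (r + t)%:E)%E) -> (F <= G)%E.
Proof.
case: G => [g| |] approx; last first.
- case: F approx => [f| |] approx //.
  + have := approx (f - 2) (ltNyr _) 1 ltr01; rewrite lee_fin; apply/contraTT => _.
    by rewrite -ltNge -addrA gtrDl addrC subr_lt0 ltr1n.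
  + by have := approx 0 (ltNyr _) 1 ltr01.
- by rewrite leey.
- apply/lee_addgt0Pr => t t0.
  have -> : (g%:E + t%:E = (g + t / 2 + t / 2)%:E)%E by rewrite -addrA -splitr.
  by apply: approx; rewrite ?lte_fin ?ltrDl divr_gt0.
Qed.

End LimitsAtZero.

Section LogRatio.
Context {R : realType}.

Definition log_ratio (f : R -> R) (e : R) : \bar R := (f e / - ln e)%:E.

Lemma small_scales (M k D : R) : 0 < k -> 0 < D ->
  exists2 D' : R, 0 < D' & forall e, 0 < e < D' ->
    [/\ 0 < e < D, 0 < e * k < D, 0 < - ln e, 0 < - ln (e * k) & M < - ln e].
Proof.
move=> k0 D0; pose m := Num.min (Num.min (D / k) D) (Num.min (k^-1) 1).
exists (Num.min m (expR (- M))).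
  by rewrite !lt_min divr_gt0 // D0 invr_gt0 k0 ltr01 expR_gt0.
move=> e /andP [e0]; rewrite !lt_min => /andP [/andP [/andP [eDk eD] /andP [ek e1]] eM].
have ek0 : 0 < e * k by rewrite mulr_gt0.
rewrite e0 eD ek0 -ltr_pdivlMr // eDk !oppr_gt0 !ln_lt0 ?e0 ?ek0 ?e1 //=.
  by rewrite ltrNr -(expRK (- M)) ltr_ln ?posrE ?expR_gt0.
by rewrite -ltr_pdivlMr // div1r.
Qed.

(* Rescaling: if g(e) <= f(e*k) + c near 0, then the limsup of g(e)/(-ln e) is
   at most that of f(e)/(-ln e), because -ln(e*k) / -ln e -> 1. *)
Lemma limsup0_log_ratio_le (f g : R -> R) (k c : R) : 0 < k ->
  (exists2 D : R, 0 < D & forall e, 0 < e < D -> g e <= f (e * k) + c) ->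
  (limsup0 (log_ratio g) <= limsup0 (log_ratio f))%E.
Proof.
move=> k0 [D D0 gf].
apply: ereal_le_approx_hi => r /limsup0_lt [Df Df0 fr] t t0.
apply: limsup0_le.
have DDf0 : 0 < Num.min D Df by rewrite lt_min D0 Df0.
have [D' D'0 small] := small_scales ((c - r * ln k) / t) _ _ k0 DDf0.
exists D' => // e /small [/andP [e0]]; rewrite lt_min => /andP [eD _].
move=> /andP [ek0]; rewrite lt_min => /andP [_ ekDf] le0 lek0 hM.
have := fr _ (introT andP (conj ek0 ekDf)); rewrite /log_ratio !lte_fin lee_fin.
rewrite ltr_pdivrMr // ler_pdivrMr // lnM ?posrE //.
have := gf e (introT andP (conj e0 eD)).
rewrite ltr_pdivrMr // in hM.
nra.
Qed.

Lemma liminf0_log_ratio_ge (f g : R -> R) (k c : R) : 0 < k ->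
  (exists2 D : R, 0 < D & forall e, 0 < e < D -> f (e * k) + c <= g e) ->
  (liminf0 (log_ratio f) <= liminf0 (log_ratio g))%E.
Proof.
move=> k0 [D D0 fg].
apply: ereal_le_approx_lo => r /liminf0_gt [Df Df0 rf] t t0.
apply: liminf0_ge.
have DDf0 : 0 < Num.min D Df by rewrite lt_min D0 Df0.
have [D' D'0 small] := small_scales ((r * ln k - c) / t) _ _ k0 DDf0.
exists D' => // e /small [/andP [e0]]; rewrite lt_min => /andP [eD _].
move=> /andP [ek0]; rewrite lt_min => /andP [_ ekDf] le0 lek0 hM.
have := rf _ (introT andP (conj ek0 ekDf)); rewrite /log_ratio !lte_fin lee_fin.
rewrite ltr_pdivlMr // ler_pdivlMr // lnM ?posrE //.
have := fg e (introT andP (conj e0 eD)).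
rewrite ltr_pdivrMr // in hM.
nra.
Qed.

End LogRatio.

Section LogLogCounts.
Context {R : realType}.

Lemma ln2_gt0 : 0 < ln (2 : R).
Proof. by rewrite ln_gt0 // ltr1n. Qed.

Lemma ln2_le1 : ln (2 : R) <= 1.
Proof. by have := @le_ln1Dx R 1; rewrite -[1 + 1]/(2%:R); apply; lra. Qed.

Lemma ln_exp2n (A : nat) : ln ((2 ^ A)%:R : R) = A%:R * ln 2.
Proof. by rewrite natrX lnXn ?ltr0n // mulr_natl. Qed.

Lemma lnln_le_of_le_exp2 (A B : nat) : (0 < A)%N -> (B <= 2 ^ A)%N ->
  ln (ln (B%:R : R)) <= ln (A%:R : R).
Proof.
move=> A0 BA.
have lnA : 0 <= ln (A%:R : R) by rewrite ln_ge0 // ler1n.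
have [B1|B2] := leqP B 1.
  have -> : ln (B%:R : R) = 0 by case: B B1 BA => [|[|//]] _ _; rewrite ?ln1 // ln0.
  by rewrite ln0.
have l2 := ln2_gt0.
have lnB : 0 < ln (B%:R : R) by rewrite ln_gt0 // ltr1n.
have : ln (B%:R : R) <= A%:R * ln 2.
  by rewrite -ln_exp2n ler_ln ?posrE ?ltr0n ?ler_nat ?expn_gt0 // ltnW.
rewrite -ler_ln ?posrE ?mulr_gt0 ?ltr0n // => /le_trans; apply.
rewrite lnM ?posrE ?ltr0n //.
have : ln (ln (2 : R)) <= 0 by rewrite ln_le0 // ln2_le1.
lra.
Qed.

(* From 2^A <= B + 1 <= 2B follows A ln 2 <= 2 ln B. *)
Lemma lnln_ge_of_exp2_le (A B : nat) : (0 < A)%N -> (2 ^ A <= B.+1)%N ->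
  ln (A%:R : R) + ln (ln 2 / 2) <= ln (ln (B%:R : R)).
Proof.
move=> A0 AB.
have l2 := ln2_gt0.
have c0 : ln (ln (2 : R) / 2) <= 0.
  by rewrite ln_le0 // ler_pdivrMr // mul1r; have := ln2_le1; lra.
have [B1|B2] := leqP B 1.
  have A1 : A = 1%N.
    apply/eqP; rewrite eqn_leq A0 andbT -(leq_exp2l _ _ (ltnSn 1)).
    exact: leq_trans AB _.
  have -> : B = 1%N by move: AB; rewrite A1; case: B B1 => [|[|]].
  by rewrite A1 ln1 add0r (@ln0 _ 0).
have lnB : 0 < ln (B%:R : R) by rewrite ln_gt0 // ltr1n.
have : A%:R * ln 2 <= ln 2 + ln (B%:R : R).
  rewrite -ln_exp2n -lnM ?posrE ?ltr0n ?(ltnW B2) // -natrM.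
  rewrite ler_ln ?posrE ?ltr0n ?expn_gt0 ?muln_gt0 ?(ltnW B2) //.
  by rewrite ler_nat (leq_trans AB) //; lia.
have : ln 2 <= ln (B%:R : R) by rewrite ler_ln ?posrE ?ltr0n ?ler_nat // ltnW.
move=> h2 h1; rewrite -lnM ?posrE ?ltr0n ?divr_gt0 // ler_ln ?posrE ?mulr_gt0 ?ltr0n ?divr_gt0 //.
lra.
Qed.

End LogLogCounts.

(* Lists as finite subsets of a type without decidable equality. *)
Lemma In_nth_index {T : Type} (x0 : T) {s : seq T} {c : T} : List.In c s ->
  exists2 i, (i < size s)%N & nth x0 s i = c.
Proof.
elim: s => //= a s IH [->|/IH [i lti <-]]; first by exists 0%N.
by exists i.+1.
Qed.

Lemma nth_index_In (T : Type) (x0 : T) (s : seq T) (i : nat) : (i < size s)%N ->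
  List.In (nth x0 s i) s.
Proof. by elim: s i => [|a s IH] [|i] //= lti; [left | right; apply: IH]. Qed.

Lemma In_memE (T : eqType) (s : seq T) (x : T) : List.In x s <-> x \in s.
Proof.
elim: s => //= a s IH; rewrite in_cons; split.
  by move=> [->|/IH ->]; rewrite ?eqxx ?orbT.
by move=> /orP [/eqP ->|/IH]; auto.
Qed.

Definition list_of_image {I : finType} {T : Type} (f : I -> T) (S : {set I}) : seq T :=
  [seq f i | i <- enum S].

Lemma In_list_of_image (I : finType) (T : Type) (f : I -> T) (S : {set I}) (y : T) :
  List.In y (list_of_image f S) <-> exists2 i, i \in S & y = f i.
Proof.
rewrite List.in_map_iff; split => [[i [<- /In_memE]]|[i iS ->]].
  by rewrite mem_enum; exists i.
by exists i; split => //; apply/In_memE; rewrite mem_enum.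
Qed.

Lemma covnumP {R : realType} {T : Type} {dd : T -> T -> R} {A : set T} {e : R} :
  (exists n, covers_with dd A e n) ->
  covers_with dd A e (covnum dd A e) /\
  forall n, covers_with dd A e n -> (covnum dd A e <= n)%N.
Proof.
move=> ex; rewrite /covnum; case: pselect => // ex'.
case: ex_minnP => m /asboolP covm minm; split => // n covn; apply: minm; exact/asboolP.
Qed.

Lemma covnum_gt0 {R : realType} {T : Type} {dd : T -> T -> R} (t0 : T) {e : R} :
  (exists n, covers_with dd setT e n) -> (0 < covnum dd setT e)%N.
Proof.
move=> /covnumP [[E [sizeE cover]] _]; rewrite lt0n; apply/eqP => N0.
by move: sizeE; rewrite N0 => /size0nil E0; have [x] := cover t0 I; rewrite E0.
Qed.

(* The Hausdorff distance for any nonnegative d: it is at most r when each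
   set lies r-near the other, and below e only if each lies e-near the other
   (the latter needs d bounded so that the sups are genuine). *)
Section HausdorffDist.
Context {R : realType} {T : Type} {dd : T -> T -> R}.
Hypothesis dd_ge0 : forall x y, 0 <= dd x y.

Lemma nonneg_image_lbound (A : set T) (f : T -> R) :
  (forall y, 0 <= f y) -> has_lbound [set f y | y in A].
Proof. by move=> f0; exists 0 => _ [y _ <-]. Qed.

Lemma hausdorff_dist_le (A B : set T) (r : R) : A !=set0 -> B !=set0 ->
  (forall a, A a -> exists2 b, B b & dd a b <= r) ->
  (forall b, B b -> exists2 a, A a & dd a b <= r) ->
  hausdorff_dist dd A B <= r.
Proof.
move=> [a0 Aa0] [b0 Bb0] AB BA; rewrite ge_max; apply/andP; split; apply: ge_sup.
- by exists (inf [set dd a0 b | b in B]), a0.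
- move=> _ [a Aa <-]; have [b Bb abr] := AB a Aa; apply: le_trans abr.
  by apply: ge_inf; [exact: nonneg_image_lbound | exists b].
- by exists (inf [set dd a b0 | a in A]), b0.
- move=> _ [b Bb <-]; have [a Aa abr] := BA b Bb; apply: le_trans abr.
  by apply: ge_inf; [exact: nonneg_image_lbound | exists a].
Qed.

Lemma hausdorff_dist_lt {D : R} {A B : set T} {e : R} : (forall x y, dd x y <= D) ->
  A !=set0 -> B !=set0 -> hausdorff_dist dd A B < e ->
  (forall a, A a -> exists2 b, B b & dd a b < e) /\
  (forall b, B b -> exists2 a, A a & dd a b < e).
Proof.
move=> ddD [a0 Aa0] [b0 Bb0]; rewrite gt_max => /andP [AB BA]; split.
- move=> a Aa; have : inf [set dd a b | b in B] < e.
    apply: le_lt_trans AB; apply: ub_le_sup; last by exists a.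
    exists D => _ [a' _ <-]; apply: le_trans (ddD a' b0).
    by apply: ge_inf; [exact: nonneg_image_lbound | exists b0].
  by move=> /(inf_lt (ex_intro _ _ (ex_intro2 _ _ b0 Bb0 erefl))) [_ [b Bb <-]]; exists b.
- move=> b Bb; have : inf [set dd a b | a in A] < e.
    apply: le_lt_trans BA; apply: ub_le_sup; last by exists b.
    exists D => _ [b' _ <-]; apply: le_trans (ddD a0 b').
    by apply: ge_inf; [exact: nonneg_image_lbound | exists a0].
  by move=> /(inf_lt (ex_intro _ _ (ex_intro2 _ _ a0 Aa0 erefl))) [_ [a Aa <-]]; exists a.
Qed.

End HausdorffDist.

Section CompactMetricSpace.
Context {R : realType} {X : Type} {d : X -> X -> R}.
Hypothesis hm : is_metric d.
Hypothesis hc : dcompact d.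
Variable x0 : X.

Lemma d_ge0 x y : 0 <= d x y. Proof. by case: hm. Qed.
Lemma d_eq0 x y : d x y = 0 <-> x = y. Proof. by case: hm. Qed.
Lemma d_sym x y : d x y = d y x. Proof. by case: hm. Qed.
Lemma d_tri x y z : d x z <= d x y + d y z. Proof. by case: hm. Qed.

Lemma dball_open x e : dopen d (dball d x e).
Proof.
move=> y dxy; exists (e - d x y); first by rewrite subr_gt0.
by move=> z dyz; apply: le_lt_trans (d_tri x y z) _; rewrite -ltrBrDl.
Qed.

Lemma ball_centers (e : R) (s : seq (set X)) :
  (forall U, List.In U s -> exists x, U = dball d x e) ->
  exists E : seq X, forall U, List.In U s -> exists2 x, List.In x E & U = dball d x e.
Proof.
elim: s => [|U s IH] balls; first by exists [::].
have [|E HE] := IH; first by move=> V sV; apply: balls; right.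
have [x ->] := balls U (or_introl erefl).
exists (x :: E) => V /= [<-|/HE [y Ey ->]]; first by exists x => //; left.
by exists y => //; right.
Qed.

Lemma totally_bounded e : 0 < e -> exists n, covers_with d setT e n.
Proof.
move=> e0.
have [||s sballs cover] := hc [set U | exists x, U = dball d x e].
- by move=> U [x ->]; apply: dball_open.
- move=> y _; exists (dball d y e); first by exists y.
  by rewrite /dball /= (proj2 (d_eq0 y y)).
have [E HE] := ball_centers _ _ sballs.
exists (size E), E; split => // y _.
have [U sU Uy] := cover y I; have [x Ex Ux] := HE U sU.
by exists x => //; rewrite -Ux.
Qed.

Lemma dist_bounded : exists D, forall x y, d x y <= D.
Proof.
have [n [E [_ cover]]] := totally_bounded _ ltr01.
have [M EM] : exists M, forall u, List.In u E -> d x0 u <= M.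
  elim: E {cover} => [|a E [M EM]]; first by exists 0.
  exists (Num.max (d x0 a) M) => u /= [<-|/EM uM]; first by rewrite le_max lexx.
  by rewrite le_max uM orbT.
have near x : d x0 x <= M + 1.
  have [u Eu ux] := cover x I; apply: le_trans (d_tri _ u _) _.
  by apply: lerD; [exact: EM | exact: ltW].
exists ((M + 1) + (M + 1)) => x y; apply: le_trans (d_tri _ x0 _) _.
by rewrite d_sym; apply: lerD.
Qed.

Lemma fin_closed (s : seq X) : dclosed d [set y | List.In y s].
Proof.
move=> x /= xs.
suff [e e0 far] : exists2 e, 0 < e & forall y, List.In y s -> e <= d x y.
  by exists e => // z /= xz /far; rewrite leNgt xz.
elim: s xs => [|a s IH] /= xs; first by exists 1.
have [|e e0 far] := IH; first by move=> sx; apply: xs; right.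
have xa : 0 < d x a.
  rewrite lt_neqAle d_ge0 andbT eq_sym; apply/eqP => /d_eq0 xa.
  by apply: xs; left.
exists (Num.min e (d x a)); first by rewrite lt_min e0.
by move=> y [<-|/far ey]; rewrite ge_min ?lexx ?orbT ?ey.
Qed.

Lemma dclosedT : dclosed d setT.
Proof. by move=> x /= []. Qed.

(* A finite list of points as an element of K(X); the empty list is sent to X. *)
Definition toK (s : seq X) : hyperspace d :=
  match pselect ([set y | List.In y s] !=set0) with
  | left ne => exist _ _ (conj ne (fin_closed s))
  | right _ => exist _ setT (conj (ex_intro _ x0 I) dclosedT)
  end.

Lemma toK_val s : [set y | List.In y s] !=set0 -> proj1_sig (toK s) = [set y | List.In y s].
Proof. by move=> ne; rewrite /toK; case: pselect. Qed.

Local Notation H := (@hausdorff R X d).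

(* Upper estimate: the 2^N(e/2) finite sets of centres of a cover by
   e/2-balls form an e-net of K(X). *)
Lemma hyper_cover e : 0 < e -> covers_with H setT e (2 ^ covnum d setT (e / 2)).
Proof.
move=> e0; have e20 : 0 < e / 2 by rewrite divr_gt0.
have [[E [sizeE coverE]] _] := covnumP (totally_bounded _ e20).
set n := covnum d setT (e / 2) in sizeE *.
pose center (i : 'I_n) := nth x0 E i.
have near_center y : exists i : 'I_n, d (center i) y < e / 2.
  have [c Ec yc] := coverE y I; have [i lti ci] := In_nth_index x0 Ec.
  by rewrite sizeE in lti; exists (Ordinal lti); rewrite /center /= ci.
pose K (Q : {set 'I_n}) := toK (list_of_image center Q).
exists [seq K Q | Q <- enum (powerset [set: 'I_n])]; split.
  by rewrite size_map -cardE card_powerset cardsT card_ord.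
move=> A _; have [Ane _] := proj2_sig A.
pose hit := [set i : 'I_n | `[< exists2 a, proj1_sig A a & d (center i) a < e / 2 >]]%SET.
have in_hit a i : proj1_sig A a -> d (center i) a < e / 2 -> i \in hit.
  by move=> Aa ia; rewrite inE; apply/asboolP; exists a.
have hit_ne : [set y | List.In y (list_of_image center hit)] !=set0.
  have [a Aa] := Ane; have [i ia] := near_center a.
  by exists (center i); apply/In_list_of_image; exists i => //; apply: in_hit ia.
exists (K hit).
  apply/List.in_map_iff; exists hit; split => //.
  by apply/In_memE; rewrite mem_enum powersetE; exact: finset.subsetT.
rewrite /dball /= /hausdorff toK_val //.
apply: (@le_lt_trans _ _ (e / 2)); last by rewrite ltr_pdivrMr // ltr_pMr // ltr1n.
apply: hausdorff_dist_le => //; first exact: d_ge0.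
- move=> _ /In_list_of_image [i + ->]; rewrite inE => /asboolP [a Aa ia].
  by exists a => //; apply: ltW.
- move=> a Aa; have [i ia] := near_center a.
  exists (center i); last exact: ltW.
  by apply/In_list_of_image; exists i => //; apply: in_hit ia.
Qed.

Lemma hyper_totally_bounded e : 0 < e -> exists n, covers_with H setT e n.
Proof. by move=> e0; exists (2 ^ covnum d setT (e / 2))%N; exact: hyper_cover. Qed.

Lemma hyper_covnum_le e : 0 < e -> (covnum H setT e <= 2 ^ covnum d setT (e / 2))%N.
Proof. by move=> e0; apply: (covnumP (hyper_totally_bounded _ e0)).2; exact: hyper_cover. Qed.

Definition separated (r : R) (L : seq X) : Prop :=
  forall i j, (i < size L)%N -> (j < size L)%N -> i <> j ->
    r <= d (nth x0 L i) (nth x0 L j).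

(* Each r/2-ball contains at most one point of an r-separated list. *)
Lemma separated_size r L : 0 < r -> separated r L -> (size L <= covnum d setT (r / 2))%N.
Proof.
move=> r0 sepL; have r20 : 0 < r / 2 by rewrite divr_gt0.
have [[E [sizeE cover]] _] := covnumP (totally_bounded _ r20).
have ball_of (i : 'I_(size L)) :
    exists j : 'I_(covnum d setT (r / 2)), `[< d (nth x0 E j) (nth x0 L i) < r / 2 >].
  have [c Ec ci] := cover (nth x0 L i) I; have [j ltj cj] := In_nth_index x0 Ec.
  by rewrite sizeE in ltj; exists (Ordinal ltj); apply/asboolP; rewrite /= cj.
pose f i := xchoose (ball_of i).
suff /leq_card : injective f by rewrite !card_ord.
move=> i j fij; apply/val_inj/eqP; apply: contraT => /eqP ij.
have /asboolP ri := xchooseP (ball_of i); have /asboolP rj := xchooseP (ball_of j).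
rewrite -/(f i) -/(f j) fij in ri rj.
have := sepL _ _ (ltn_ord i) (ltn_ord j) ij; apply/contraTT => _; rewrite -ltNge.
apply: le_lt_trans (d_tri _ (nth x0 E (f j)) _) _.
by rewrite d_sym in ri; have := ltrD ri rj; rewrite -splitr.
Qed.

(* A maximal r-separated list is an r-net, so it has at least N(r) points. *)
Lemma maximal_separated r : 0 < r -> exists2 L, separated r L & (covnum d setT r <= size L)%N.
Proof.
move=> r0.
pose P k := `[< exists2 L, size L = k & separated r L >].
have P0 : exists k, P k by exists 0%N; apply/asboolP; exists [::] => // i j.
have Pub k : P k -> (k <= covnum d setT (r / 2))%N.
  by move=> /asboolP [L <- sepL]; exact: separated_size.
have [m /asboolP [L sizeL sepL] mmax] := ex_maxnP P0 Pub.
exists L => //; apply: (covnumP (totally_bounded _ r0)).2.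
exists L; split => // x _.
have [[y Ly yx]|far] := pselect (exists2 y, List.In y L & d y x < r); first by exists y.
have : P (size (x :: L)).
  apply/asboolP; exists (x :: L) => // -[|i] [|j] //= lti ltj ij.
  - by rewrite d_sym leNgt; apply/negP => xj; apply: far; exists (nth x0 L j); first exact: nth_index_In.
  - by rewrite leNgt; apply/negP => xi; apply: far; exists (nth x0 L i); first exact: nth_index_In.
  - by apply: sepL => // ij'; apply: ij; rewrite ij'.
by move/mmax; rewrite /= sizeL ltnn.
Qed.

Definition sublist (L : seq X) (Q : {set 'I_(size L)}) : seq X :=
  list_of_image (fun i : 'I_(size L) => nth x0 L i) Q.

Lemma separated_subset e L (c : set X) (Q Q' : {set 'I_(size L)}) :
  separated (e * 2) L -> c !=set0 -> Q != finset.set0 -> Q' != finset.set0 ->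
  hausdorff_dist d c [set y | List.In y (sublist L Q)] < e ->
  hausdorff_dist d c [set y | List.In y (sublist L Q')] < e ->
  (Q \subset Q')%SET.
Proof.
move=> sepL cne Qne Q'ne cQ cQ'.
have [D dD] := dist_bounded.
have image_ne (P : {set 'I_(size L)}) : P != finset.set0 ->
    [set y | List.In y (sublist L P)] !=set0.
  by move=> /set0Pn [i Pi]; exists (nth x0 L i); apply/In_list_of_image; exists i.
have [_ near_Q] := hausdorff_dist_lt d_ge0 dD cne (image_ne _ Qne) cQ.
have [near_Q' _] := hausdorff_dist_lt d_ge0 dD cne (image_ne _ Q'ne) cQ'.
apply/fintype.subsetP => i Qi.
have [a ca ai] : exists2 a, c a & d a (nth x0 L i) < e.
  by apply: near_Q; apply/In_list_of_image; exists i.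
have [_ /In_list_of_image [j Q'j ->] aj] := near_Q' a ca.
suff -> : i = j by [].
apply/val_inj/eqP; apply: contraT => /eqP ij.
have := sepL _ _ (ltn_ord i) (ltn_ord j) ij; apply/contraTT => _; rewrite -ltNge.
apply: le_lt_trans (d_tri _ a _) _.
by rewrite d_sym mulr_natr mulr2n ltrD.
Qed.

(* Lower estimate: the nonempty subfamilies of a 2e-separated list L lie in
   pairwise distinct e-balls of any cover of K(X), hence 2^|L| <= N_H(e) + 1. *)
Lemma hyper_covnum_ge_separated e L : 0 < e -> separated (e * 2) L ->
  (2 ^ size L <= (covnum H setT e).+1)%N.
Proof.
move=> e0 sepL.
have [[C [sizeC coverC]] _] := covnumP (hyper_totally_bounded _ e0).
set b := covnum H setT e in sizeC *.
pose K (Q : {set 'I_(size L)}) := toK (sublist L Q).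
have KE Q : Q != finset.set0 -> proj1_sig (K Q) = [set y | List.In y (sublist L Q)].
  move=> /set0Pn [i Qi]; apply: toK_val.
  by exists (nth x0 L i); apply/In_list_of_image; exists i.
have ball_of Q : exists k : 'I_b, `[< H (nth (toK [::]) C k) (K Q) < e >].
  have [c Cc cQ] := coverC (K Q) I; have [k ltk ck] := In_nth_index (toK [::]) Cc.
  by rewrite sizeC in ltk; exists (Ordinal ltk); apply/asboolP; rewrite /= ck.
have shared_ball Q Q' k : Q != finset.set0 -> Q' != finset.set0 ->
    H (nth (toK [::]) C k) (K Q) < e -> H (nth (toK [::]) C k) (K Q') < e ->
    (Q \subset Q')%SET.
  move=> Qne Q'ne; rewrite /hausdorff (KE _ Qne) (KE _ Q'ne).
  by apply: separated_subset => //; case: (proj2_sig (nth (toK [::]) C k)).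
pose g (Q : {set 'I_(size L)}) : 'I_b.+1 :=
  if Q == finset.set0 then ord_max else widen_ord (leqnSn b) (xchoose (ball_of Q)).
have g_inj : injective g.
  move=> Q Q'; rewrite /g.
  case: eqP => [->|/eqP Qne]; case: eqP => [->|/eqP Q'ne] // /(congr1 val) /=.
  - by move=> gQ'; have := ltn_ord (xchoose (ball_of Q')); rewrite -gQ' ltnn.
  - by move=> gQ; have := ltn_ord (xchoose (ball_of Q)); rewrite gQ ltnn.
  move=> /val_inj kk.
  have /asboolP bQ := xchooseP (ball_of Q); have /asboolP bQ' := xchooseP (ball_of Q').
  rewrite kk in bQ.
  apply/eqP; rewrite finset.eqEsubset.
  by rewrite (shared_ball _ _ _ Qne Q'ne bQ bQ') (shared_ball _ _ _ Q'ne Qne bQ' bQ).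
have := leq_card g g_inj; rewrite card_ord; apply: leq_trans.
have -> : (2 ^ size L = #|powerset [set: 'I_(size L)]|)%N.
  by rewrite card_powerset cardsT card_ord.
exact: max_card.
Qed.

Lemma hyper_covnum_ge e : 0 < e -> (2 ^ covnum d setT (e * 2) <= (covnum H setT e).+1)%N.
Proof.
move=> e0; have [L sepL NL] := maximal_separated _ (mulr_gt0 e0 (ltr0n _ 2)).
by apply: leq_trans (hyper_covnum_ge_separated _ _ e0 sepL); rewrite leq_pexp2l.
Qed.

Lemma covnum_pos e : 0 < e -> (0 < covnum d setT e)%N.
Proof. by move=> e0; apply: (covnum_gt0 x0); exact: totally_bounded. Qed.

(* ln ln N_H(e) <= ln N(e/2) gives the upper comparison. *)
Lemma upper_metric_order_le : (upper_metric_order H setT <= upper_box_dim d setT)%E.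
Proof.
apply: (@limsup0_log_ratio_le _ _ _ 2^-1 0); first by rewrite invr_gt0.
exists 1 => // e /andP [e0 _]; rewrite addr0.
apply: lnln_le_of_le_exp2; last exact: hyper_covnum_le.
by apply: covnum_pos; rewrite divr_gt0.
Qed.

(* ln N(2e) + ln (ln 2 / 2) <= ln ln N_H(e) gives the lower comparison. *)
Lemma lower_box_dim_le : (lower_box_dim d setT <= lower_metric_order H setT)%E.
Proof.
apply: (@liminf0_log_ratio_ge _ _ _ 2 (ln (ln 2 / 2))) => //.
exists 1 => // e /andP [e0 _].
apply: lnln_ge_of_exp2_le; last exact: hyper_covnum_ge.
by apply: covnum_pos; rewrite mulr_gt0.
Qed.

End CompactMetricSpace.

Theorem proposition4p5 (R : realType) (X : Type) (d : X -> X -> R)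
  (hmetric : is_metric d) (hnonempty : exists x : X, True)
  (hcompact : dcompact d) :
  (lower_box_dim d setT <= lower_metric_order (@hausdorff R X d) setT)%E /\
  (lower_metric_order (@hausdorff R X d) setT
     <= upper_metric_order (@hausdorff R X d) setT)%E /\
  (upper_metric_order (@hausdorff R X d) setT <= upper_box_dim d setT)%E.
Proof.
have [x0 _] := hnonempty.
split; first exact: lower_box_dim_le hmetric hcompact x0.
split; first exact: liminf0_le_limsup0.
exact: upper_metric_order_le hmetric hcompact x0.
Qed.
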